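(* Let $L$ be an infinite set and consider the edged cube $\bar Q_L$. For a basic sequence, the following are equivalent: it is convergent over $f_{\mathrm{solved}}$; it is universally convergent; it is twist-finite.
   Context: Let $L$ be an infinite set, $-L=\{-r:r\in L\}$ a disjoint copy of $L$, and $0$ a new element; $L^\dagger=-L\cup\{0\}\cup L$ with $-(-r)=r$, $-0=0$. Adjoin $\pm\infty$ with $-(+\infty)=-\infty$ and set $\bar L^\dagger=L^\dagger\cup\{\pm\infty\}$. Points of $U=(\bar L^\dagger)^3$ have coordinates $x,y,z$. The edged cube $\bar Q_L$ is the set of cells $(p,i)$ with $p\in U$, $i\in\{x,y,z\}$, $p_i\in\{\pm\infty\}$ ($i$ marks the face of the cell). For $i\in\{x,y,z\}$, $\alpha\in\bar L^\dagger$, the quarter-turn twist $T_{i,\alpha}$ is the permutation of cells fixing every cell whose point $p$ has $p_i\ne\alpha$ and acting on the others by the rotation $T_{x,\alpha}(\alpha,y,z)=(\alpha,-z,y)$, $T_{y,\alpha}(x,\alpha,z)=(z,\alpha,-x)$, $T_{z,\alpha}(x,y,\alpha)=(-y,x,\alpha)$, the marked coordinate being carried along by the rotation. Basic twists are $T,T^2,T^3$ for quarter-turn twists $T$. A basic sequence is a sequence $\langle\sigma_\eta:\eta<\theta\rangle$ of basic twists of ordinal length $\theta$; it is twist-finite if each basic twist occurs in it only finitely many times. A labelling is a map $f$ from cells to $X\cup\{\mathrm{NaC}\}$ for a set $X\not\ni\mathrm{NaC}$; it is legal if it never takes value NaC; a configuration is a labelling with $X$ the six colors red, white, green, orange, yellow,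 blue. The solved configuration $f_{\mathrm{solved}}$ colors cell $(p,i)$ red, blue, white, orange, green, yellow according as $p_i=+\infty$ with $i=x,y,z$, or $p_i=-\infty$ with $i=x,y,z$. A twist $\sigma$ acts by $(\sigma f)(c)=f(\sigma^{-1}c)$. Applying $\langle\sigma_\eta:\eta<\theta\rangle$ to $f_0$ produces $f_{\eta+1}=\sigma_\eta f_\eta$, and for limit $\lambda\le\theta$, $f_\lambda(c)$ is the eventually constant value of $f_\eta(c)$ ($\eta<\lambda$) if it exists and NaC otherwise; $f_\theta$ is the terminal labelling. The sequence is convergent over $f_0$ if $f_\theta$ is legal, and universally convergent if it is convergent over the identity labelling (each cell labelled by itself). *)

From Stdlib Require Import List Classical ClassicalEpsilon.
Set Implicit Arguments.

Definition infinite (L : Type) : Prop := forall l : list L, exists x : L, ~ In x l.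

Inductive coord (L : Type) : Type :=
  | cpos : L -> coord L
  | cneg : L -> coord L
  | czero : coord L
  | pinf : coord L
  | ninf : coord L.
Arguments czero {L}. Arguments pinf {L}. Arguments ninf {L}.

Definition cneg_op {L} (v : coord L) : coord L :=
  match v with
  | cpos r => cneg r | cneg r => cpos r | czero => czero
  | pinf => ninf | ninf => pinf end.

Inductive axis : Type := AX | AY | AZ.

Definition point (L : Type) : Type := (coord L * coord L * coord L)%type.

Definition get {L} (p : point L) (i : axis) : coord L :=
  match p, i with
  | (x, _, _), AX => x | (_, y, _), AY => y | (_, _, z), AZ => z end.

Definition is_inf {L} (v : coord L) : bool :=
  match v with pinf | ninf => true | _ => false end.

Definition cell (L : Type) : Type :=
  { q : point L * axis | is_inf (get (fst q) (snd q)) = true }.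

Definition rot_pt {L} (i : axis) (p : point L) : point L :=
  match p with (x, y, z) =>
  match i with
  | AX => (x, cneg_op z, y)
  | AY => (z, y, cneg_op x)
  | AZ => (cneg_op y, x, z)
  end end.

(* where the marked coordinate is carried by the rotation *)
Definition rot_ax (i j : axis) : axis :=
  match i, j with
  | AX, AX => AX | AX, AY => AZ | AX, AZ => AY
  | AY, AX => AZ | AY, AY => AY | AY, AZ => AX
  | AZ, AX => AY | AZ, AY => AX | AZ, AZ => AZ end.

Lemma rot_cell_ok {L} (i : axis) (q : point L * axis) :
  is_inf (get (fst q) (snd q)) = true ->
  is_inf (get (rot_pt i (fst q)) (rot_ax i (snd q))) = true.
Proof.
  destruct q as [[[x y] z] j]; simpl.
  destruct i, j, x, y, z; simpl; auto.
Qed.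

Definition rot_cell {L} (i : axis) (c : cell L) : cell L :=
  exist _ (rot_pt i (fst (proj1_sig c)), rot_ax i (snd (proj1_sig c)))
        (@rot_cell_ok L i (proj1_sig c) (proj2_sig c)).

Definition twist {L} (i : axis) (alpha : coord L) (c : cell L) : cell L :=
  if excluded_middle_informative (get (fst (proj1_sig c)) i = alpha)
  then rot_cell i c else c.

Inductive power : Type := P1 | P2 | P3.
Definition pow_nat (k : power) : nat := match k with P1 => 1 | P2 => 2 | P3 => 3 end.

Record basic_twist (L : Type) : Type := BT
  { bt_axis : axis; bt_val : coord L; bt_pow : power }.

Definition bt_perm {L} (b : basic_twist L) (c : cell L) : cell L :=
  Nat.iter (pow_nat (bt_pow b)) (twist (bt_axis b) (bt_val b)) c.
Definition bt_perm_inv {L} (b : basic_twist L) (c : cell L) : cell L :=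
  Nat.iter (4 - pow_nat (bt_pow b)) (twist (bt_axis b) (bt_val b)) c.

(* labellings: None = NaC *)
Definition labelling (L X : Type) : Type := cell L -> option X.
Definition legal {L X} (f : labelling L X) : Prop := forall c, f c <> None.

Definition act {L X} (b : basic_twist L) (f : labelling L X) : labelling L X :=
  fun c => f (bt_perm_inv b c).

Inductive color : Type := red | white | green | orange | yellow | blue.

Definition f_solved {L} : labelling L color :=
  fun c => let (p, i) := proj1_sig c in
  match get p i, i with
  | pinf, AX => Some red | pinf, AY => Some blue | pinf, AZ => Some white
  | ninf, AX => Some orange | ninf, AY => Some green | ninf, AZ => Some yellow
  | _, _ => Some red (* impossible for a cell *)
  end.

Definition f_identity {L} : labelling L (cell L) := fun c => Some c.

(* An ordinal theta is represented by a well-ordered index type (I, lt). *)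
Definition well_order {I} (lt : I -> I -> Prop) : Prop :=
  well_founded lt /\ (forall a b c, lt a b -> lt b c -> lt a c) /\
  (forall a b, lt a b \/ a = b \/ lt b a).

(* stages eta <= theta: Some eta for eta < theta, None for theta itself *)
Definition stage (I : Type) := option I.
Definition slt {I} (lt : I -> I -> Prop) (s t : stage I) : Prop :=
  match s, t with
  | Some a, Some b => lt a b
  | Some _, None => True
  | None, _ => False end.
Definition sle {I} (lt : I -> I -> Prop) (s t : stage I) : Prop := slt lt s t \/ s = t.

Definition is_limit {I} (lt : I -> I -> Prop) (s : stage I) : Prop :=
  (exists t, slt lt t s) /\ (forall t, slt lt t s -> exists u, slt lt t u /\ slt lt u s).

Definition eventually_const {I L X} (lt : I -> I -> Prop) (F : stage I -> labelling L X)
  (s : stage I) (c : cell L) (v : option X) : Prop :=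
  exists t, slt lt t s /\ forall u, sle lt t u -> slt lt u s -> F u c = v.

Definition is_run {I L X} (lt : I -> I -> Prop) (sigma : I -> basic_twist L)
  (f0 : labelling L X) (F : stage I -> labelling L X) : Prop :=
  (* f_0 = f0 *)
  (forall s, (forall t, ~ slt lt t s) -> F s = f0) /\
  (* f_{eta+1} = sigma_eta f_eta *)
  (forall (e : I) (s : stage I), slt lt (Some e) s ->
     (forall t, slt lt (Some e) t -> sle lt s t) ->
     F s = act (sigma e) (F (Some e))) /\
  (forall s, is_limit lt s -> forall c,
     (forall v, eventually_const lt F s c v -> F s c = v) /\
     ((~ exists v, eventually_const lt F s c v) -> F s c = None)).

Definition convergent {I L X} (lt : I -> I -> Prop) (sigma : I -> basic_twist L)
  (f0 : labelling L X) : Prop :=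
  exists F, is_run lt sigma f0 F /\ legal (F None).

Definition universally_convergent {I L} (lt : I -> I -> Prop)
  (sigma : I -> basic_twist L) : Prop :=
  convergent lt sigma (@f_identity L).

Definition twist_finite {I L} (sigma : I -> basic_twist L) : Prop :=
  forall b : basic_twist L, exists l : list I, forall e, sigma e = b -> In e l.

(* A basic twist T_{i,a}^k moves every cell whose point lies in the slice p_i = a by one
   and the same rotation of the cube, and fixes all other cells.

   If the sequence is twist-finite, a cell is moved only by the finitely many occurrences of
   the nine basic twists through its slices, so below every limit its label is eventually
   constant and no NaC ever appears.

   Conversely, call a labelling rigid if no rotation that moves an edge position (a point
   with two infinite coordinates) carries the legal labels there onto equal labels. The
   solved and identity labellings are rigid, and rigidity survives twists (which conjugate
   the rotation) and limits (an edge position carries finitely many cells). A NaC never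
   disappears: it only moves within the finite rotation orbit of its cell. If a basic twist
   b occurs infinitely often, let lambda be the least stage below which b occurs cofinally;
   it is a limit. Either f_lambda has a NaC, which then survives to the end, or f_lambda is
   legal and b-invariant, contradicting rigidity at the edge position (a, +oo, +oo) moved
   by b. *)

From Stdlib Require Import List Bool Arith Eqdep_dec.
From Stdlib Require Import Classical ClassicalEpsilon FunctionalExtensionality.
Import ListNotations.
Set Implicit Arguments.

(** * Rotations of the cube *)

Definition sgn {L} (b : bool) (v : coord L) : coord L := if b then cneg_op v else v.

(* [SPerm a1 b1 a2 b2 a3 b3] sends [p] to the point whose [k]-th coordinate is
   [p_(a_k)], negated iff [b_k]. *)
Inductive sperm : Type := SPerm : axis -> bool -> axis -> bool -> axis -> bool -> sperm.

Definition sperm_src (s : sperm) (k : axis) : axis :=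
  match s, k with
  | SPerm a _ _ _ _ _, AX => a | SPerm _ _ a _ _ _, AY => a | SPerm _ _ _ _ a _, AZ => a
  end.
Definition sperm_flip (s : sperm) (k : axis) : bool :=
  match s, k with
  | SPerm _ b _ _ _ _, AX => b | SPerm _ _ _ b _ _, AY => b | SPerm _ _ _ _ _ b, AZ => b
  end.

Definition sperm_pt {L} (s : sperm) (p : point L) : point L :=
  (sgn (sperm_flip s AX) (get p (sperm_src s AX)),
   sgn (sperm_flip s AY) (get p (sperm_src s AY)),
   sgn (sperm_flip s AZ) (get p (sperm_src s AZ))).

Definition axis_eqb (a b : axis) : bool :=
  match a, b with AX, AX | AY, AY | AZ, AZ => true | _, _ => false end.

Lemma axis_eqb_eq a b : axis_eqb a b = true <-> a = b.
Proof. destruct a, b; simpl; split; congruence. Qed.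

Definition sperm_axis (s : sperm) (j : axis) : axis :=
  if axis_eqb (sperm_src s AX) j then AX else if axis_eqb (sperm_src s AY) j then AY else AZ.

Definition sperm_comp (a b : sperm) : sperm :=
  SPerm (sperm_src b (sperm_src a AX)) (xorb (sperm_flip a AX) (sperm_flip b (sperm_src a AX)))
        (sperm_src b (sperm_src a AY)) (xorb (sperm_flip a AY) (sperm_flip b (sperm_src a AY)))
        (sperm_src b (sperm_src a AZ)) (xorb (sperm_flip a AZ) (sperm_flip b (sperm_src a AZ))).

Definition sperm_id : sperm := SPerm AX false AY false AZ false.

Definition quarter (i : axis) : sperm :=
  match i with
  | AX => SPerm AX false AZ true AY false
  | AY => SPerm AZ false AY false AX true
  | AZ => SPerm AY true AX false AZ false
  end.

Fixpoint quarter_pow (i : axis) (n : nat) : sperm :=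
  match n with 0 => sperm_id | S m => sperm_comp (quarter i) (quarter_pow i m) end.

Definition axes : list axis := [AX; AY; AZ].

Definition axis_triples : list (axis * axis * axis) :=
  [(AX, AY, AZ); (AX, AZ, AY); (AY, AX, AZ); (AY, AZ, AX); (AZ, AX, AY); (AZ, AY, AX)].

Definition odd_triple (t : axis * axis * axis) : bool :=
  match t with (AX, AY, AZ) | (AY, AZ, AX) | (AZ, AX, AY) => false | _ => true end.

Definition signed_perms : list sperm :=
  flat_map (fun t => let '(a1, a2, a3) := t in
    flat_map (fun b1 => flat_map (fun b2 =>
      map (fun b3 => SPerm a1 b1 a2 b2 a3 b3) [false; true]) [false; true]) [false; true])
    axis_triples.

Definition reverses_orientation (s : sperm) : bool :=
  match s with
  | SPerm a1 b1 a2 b2 a3 b3 => xorb (odd_triple (a1, a2, a3)) (xorb b1 (xorb b2 b3))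
  end.

Definition rotations : list sperm := filter (fun s => negb (reverses_orientation s)) signed_perms.

Definition sperm_eq_dec (a b : sperm) : {a = b} + {a <> b}.
Proof. decide equality; first [apply bool_dec | decide equality]. Defined.

Definition is_rotation (s : sperm) : bool :=
  if in_dec sperm_eq_dec s rotations then true else false.

Lemma is_rotationP s : is_rotation s = true -> In s rotations.
Proof. unfold is_rotation. destruct in_dec; congruence. Qed.

Lemma forallb_In {A} (f : A -> bool) l {x} : forallb f l = true -> In x l -> f x = true.
Proof. rewrite forallb_forall. auto. Qed.

Lemma axis_in_axes j : In j axes.
Proof. destruct j; simpl; auto. Qed.

Lemma rotations_comp a b : In a rotations -> In b rotations -> In (sperm_comp a b) rotations.
Proof.
  intros Ha Hb. apply is_rotationP.
  assert (H : forallb (fun a => forallb (fun b => is_rotation (sperm_comp a b)) rotations)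
                rotations = true) by (vm_compute; reflexivity).
  exact (forallb_In _ _ (forallb_In _ _ H Ha) Hb).
Qed.

Lemma rotations_inv a : In a rotations ->
  exists b, In b rotations /\ sperm_comp a b = sperm_id /\ sperm_comp b a = sperm_id.
Proof.
  intro Ha.
  assert (H : forallb (fun a => existsb (fun b =>
                is_rotation b &&
                (if sperm_eq_dec (sperm_comp a b) sperm_id then true else false) &&
                (if sperm_eq_dec (sperm_comp b a) sperm_id then true else false)) rotations)
                rotations = true) by (vm_compute; reflexivity).
  destruct (proj1 (existsb_exists _ _) (forallb_In _ _ H Ha)) as [b [_ Hb]].
  rewrite !andb_true_iff in Hb. destruct Hb as [[Hb E1] E2].
  exists b. split; [now apply is_rotationP|].
  destruct sperm_eq_dec, sperm_eq_dec; easy.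
Qed.

Lemma sperm_axis_comp a b j : In a rotations -> In b rotations ->
  sperm_axis (sperm_comp a b) j = sperm_axis a (sperm_axis b j).
Proof.
  intros Ha Hb. apply axis_eqb_eq.
  assert (H : forallb (fun a => forallb (fun b => forallb (fun j =>
                axis_eqb (sperm_axis (sperm_comp a b) j) (sperm_axis a (sperm_axis b j)))
                axes) rotations) rotations = true) by (vm_compute; reflexivity).
  exact (forallb_In _ _ (forallb_In _ _ (forallb_In _ _ H Ha) Hb) (axis_in_axes j)).
Qed.

Lemma sperm_src_axis a j : In a rotations -> sperm_src a (sperm_axis a j) = j.
Proof.
  intro Ha. apply axis_eqb_eq.
  assert (H : forallb (fun a => forallb (fun j =>
                axis_eqb (sperm_src a (sperm_axis a j)) j) axes) rotations = true)
    by (vm_compute; reflexivity).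
  exact (forallb_In _ _ (forallb_In _ _ H Ha) (axis_in_axes j)).
Qed.

Lemma sperm_axis_inj a j1 j2 : In a rotations -> sperm_axis a j1 = sperm_axis a j2 -> j1 = j2.
Proof.
  intros Ha E. rewrite <- (sperm_src_axis j1 Ha), <- (sperm_src_axis j2 Ha), E. reflexivity.
Qed.

Lemma rotation_fixing_two_axes a j1 j2 : In a rotations -> j1 <> j2 ->
  sperm_axis a j1 = j1 -> sperm_flip a j1 = false ->
  sperm_axis a j2 = j2 -> sperm_flip a j2 = false -> a = sperm_id.
Proof.
  intros Ha Hj A1 F1 A2 F2.
  assert (H : forallb (fun a => forallb (fun j1 => forallb (fun j2 =>
                implb (negb (axis_eqb j1 j2) && axis_eqb (sperm_axis a j1) j1 &&
                       negb (sperm_flip a j1) && axis_eqb (sperm_axis a j2) j2 &&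
                       negb (sperm_flip a j2))
                      (if sperm_eq_dec a sperm_id then true else false))
                axes) axes) rotations = true) by (vm_compute; reflexivity).
  pose proof (forallb_In _ _ (forallb_In _ _ (forallb_In _ _ H Ha) (axis_in_axes j1))
                (axis_in_axes j2)) as K.
  rewrite A1, F1, A2, F2 in K.
  replace (axis_eqb j1 j2) with false in K
    by (destruct (axis_eqb j1 j2) eqn:E; [now apply axis_eqb_eq in E | reflexivity]).
  replace (axis_eqb j1 j1) with true in K by (symmetry; now apply axis_eqb_eq).
  replace (axis_eqb j2 j2) with true in K by (symmetry; now apply axis_eqb_eq).
  destruct sperm_eq_dec; easy.
Qed.

Lemma sperm_id_rotation : In sperm_id rotations.
Proof. apply is_rotationP. vm_compute. reflexivity. Qed.

Lemma quarter_rotation i : In (quarter i) rotations.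
Proof. apply is_rotationP. destruct i; vm_compute; reflexivity. Qed.

Lemma quarter_pow_rotation i n : In (quarter_pow i n) rotations.
Proof.
  induction n as [|n IH]; [exact sperm_id_rotation|].
  apply rotations_comp; [apply quarter_rotation | exact IH].
Qed.

Lemma sgn_sgn {L} a b (v : coord L) : sgn a (sgn b v) = sgn (xorb a b) v.
Proof. destruct a, b, v; reflexivity. Qed.

Lemma is_inf_sgn {L} b (v : coord L) : is_inf (sgn b v) = is_inf v.
Proof. destruct b, v; reflexivity. Qed.

Lemma get_sperm_pt {L} s (p : point L) k :
  get (sperm_pt s p) k = sgn (sperm_flip s k) (get p (sperm_src s k)).
Proof. destruct k; reflexivity. Qed.

Lemma point_ext {L} (p q : point L) : (forall k, get p k = get q k) -> p = q.
Proof.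
  destruct p as [[x y] z], q as [[x' y'] z']. intro H.
  specialize (H AX) as Hx; specialize (H AY) as Hy; specialize (H AZ) as Hz.
  simpl in *. congruence.
Qed.

Lemma sperm_pt_comp {L} a b (p : point L) : sperm_pt (sperm_comp a b) p = sperm_pt a (sperm_pt b p).
Proof.
  apply point_ext. intro k. rewrite !get_sperm_pt, sgn_sgn. destruct a, k; reflexivity.
Qed.

Lemma sperm_pt_id {L} (p : point L) : sperm_pt sperm_id p = p.
Proof. destruct p as [[x y] z]; reflexivity. Qed.

Lemma get_sperm_pt_axis {L} s (p : point L) j : In s rotations ->
  get (sperm_pt s p) (sperm_axis s j) = sgn (sperm_flip s (sperm_axis s j)) (get p j).
Proof. intro Hs. rewrite get_sperm_pt, sperm_src_axis; auto. Qed.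

Lemma get_quarter_pow_pt {L} i n (p : point L) : get (sperm_pt (quarter_pow i n) p) i = get p i.
Proof.
  induction n as [|n IH]; [now destruct p as [[? ?] ?], i|].
  simpl quarter_pow. rewrite sperm_pt_comp, <- IH.
  destruct i, (sperm_pt (quarter_pow _ n) p) as [[? ?] ?]; reflexivity.
Qed.

Lemma rot_pt_quarter {L} i (p : point L) : rot_pt i p = sperm_pt (quarter i) p.
Proof. destruct i, p as [[x y] z]; reflexivity. Qed.

Lemma rot_ax_quarter i j : rot_ax i j = sperm_axis (quarter i) j.
Proof. destruct i, j; reflexivity. Qed.

Lemma quarter_pow_4 i : quarter_pow i 4 = sperm_id.
Proof. destruct i; reflexivity. Qed.

(** * Rotations of cells and basic twists *)

Definition pt {L} (c : cell L) : point L := fst (proj1_sig c).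
Definition ax {L} (c : cell L) : axis := snd (proj1_sig c).

Lemma cell_eq {L} (c1 c2 : cell L) : proj1_sig c1 = proj1_sig c2 -> c1 = c2.
Proof.
  destruct c1 as [r1 H1], c2 as [r2 H2]; simpl. intro E. subst.
  f_equal. apply UIP_dec, bool_dec.
Qed.

Lemma is_inf_sperm_axis {L} s (q : point L) j : In s rotations -> is_inf (get q j) = true ->
  is_inf (get (sperm_pt s q) (sperm_axis s j)) = true.
Proof. intros Hs H. rewrite get_sperm_pt_axis, is_inf_sgn; auto. Qed.

(* The fallback [c] is a junk value, never taken when [s] is a rotation. *)
Definition sperm_cell {L} (s : sperm) (c : cell L) : cell L :=
  match bool_dec (is_inf (get (sperm_pt s (pt c)) (sperm_axis s (ax c)))) true with
  | left H => exist _ (sperm_pt s (pt c), sperm_axis s (ax c)) H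
  | right _ => c
  end.

Lemma sperm_cell_val {L} s (c : cell L) : In s rotations ->
  proj1_sig (sperm_cell s c) = (sperm_pt s (pt c), sperm_axis s (ax c)).
Proof.
  intro Hs. unfold sperm_cell. destruct bool_dec as [H|H]; [reflexivity|].
  exfalso. apply H, is_inf_sperm_axis; [exact Hs | exact (proj2_sig c)].
Qed.

Lemma pt_sperm_cell {L} s (c : cell L) : In s rotations -> pt (sperm_cell s c) = sperm_pt s (pt c).
Proof. intro Hs. unfold pt at 1. now rewrite sperm_cell_val. Qed.

Lemma ax_sperm_cell {L} s (c : cell L) : In s rotations ->
  ax (sperm_cell s c) = sperm_axis s (ax c).
Proof. intro Hs. unfold ax at 1. now rewrite sperm_cell_val. Qed.

Lemma sperm_cell_comp {L} a b (c : cell L) : In a rotations -> In b rotations ->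
  sperm_cell (sperm_comp a b) c = sperm_cell a (sperm_cell b c).
Proof.
  intros Ha Hb. apply cell_eq.
  rewrite !sperm_cell_val, pt_sperm_cell, ax_sperm_cell, sperm_pt_comp, sperm_axis_comp;
    auto using rotations_comp.
Qed.

Lemma sperm_cell_id {L} (c : cell L) : sperm_cell sperm_id c = c.
Proof.
  apply cell_eq. rewrite sperm_cell_val by exact sperm_id_rotation.
  destruct c as [[p []] H]; unfold pt, ax; simpl; now rewrite sperm_pt_id.
Qed.

Definition slice_rot {L} (i : axis) (a : coord L) (m : nat) (p : point L) : sperm :=
  if excluded_middle_informative (get p i = a) then quarter_pow i m else sperm_id.

Lemma slice_rot_rotation {L} i (a : coord L) m p : In (slice_rot i a m p) rotations.
Proof.
  unfold slice_rot. destruct excluded_middle_informative.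
  - apply quarter_pow_rotation.
  - exact sperm_id_rotation.
Qed.

Lemma slice_rot_congr {L} i (a : coord L) m p p' :
  get p i = get p' i -> slice_rot i a m p = slice_rot i a m p'.
Proof. intro E. unfold slice_rot. now rewrite E. Qed.

Lemma get_slice_rot_pt {L} i (a : coord L) m p (q : point L) :
  get (sperm_pt (slice_rot i a m p) q) i = get q i.
Proof.
  unfold slice_rot. destruct excluded_middle_informative.
  - apply get_quarter_pow_pt.
  - now rewrite sperm_pt_id.
Qed.

Lemma slice_rot_pt_inj {L} i (a : coord L) m (p p' : point L) :
  sperm_pt (slice_rot i a m p) p = sperm_pt (slice_rot i a m p') p' -> p = p'.
Proof.
  intro E.
  assert (Ei : get p i = get p' i).
  { rewrite <- (get_slice_rot_pt i a m p p), <- (get_slice_rot_pt i a m p' p'). now f_equal. }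
  rewrite <- (@slice_rot_congr L i a m p p' Ei) in E.
  destruct (rotations_inv (slice_rot_rotation i a m p)) as [r [_ [_ Er]]].
  apply (f_equal (sperm_pt r)) in E. now rewrite <- !sperm_pt_comp, Er, !sperm_pt_id in E.
Qed.

Lemma iter_twist {L} i (a : coord L) m c :
  Nat.iter m (twist i a) c = sperm_cell (slice_rot i a m (pt c)) c.
Proof.
  induction m as [|m IH].
  - unfold slice_rot. simpl. destruct excluded_middle_informative; now rewrite sperm_cell_id.
  - simpl Nat.iter. rewrite IH. unfold twist at 1.
    fold (pt (sperm_cell (slice_rot i a m (pt c)) c)).
    rewrite pt_sperm_cell, get_slice_rot_pt by apply slice_rot_rotation.
    unfold slice_rot. destruct excluded_middle_informative; [|now rewrite sperm_cell_id].
    simpl quarter_pow.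
    rewrite sperm_cell_comp by (apply quarter_rotation || apply quarter_pow_rotation).
    apply cell_eq. rewrite sperm_cell_val by apply quarter_rotation.
    simpl. now rewrite rot_pt_quarter, rot_ax_quarter.
Qed.

Lemma bt_perm_invK {L} (b : basic_twist L) c : bt_perm_inv b (bt_perm b c) = c.
Proof.
  unfold bt_perm_inv, bt_perm. rewrite <- Nat.iter_add.
  replace (4 - pow_nat (bt_pow b) + pow_nat (bt_pow b)) with 4
    by (destruct (bt_pow b); reflexivity).
  rewrite iter_twist. unfold slice_rot.
  destruct excluded_middle_informative; rewrite ?quarter_pow_4; apply sperm_cell_id.
Qed.

Definition slice_twists {L} (c : cell L) : list (basic_twist L) :=
  flat_map (fun j => map (fun k => BT j (get (pt c) j) k) [P1; P2; P3]) axes.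

Lemma bt_perm_inv_outside_slice {L} (b : basic_twist L) c :
  ~ In b (slice_twists c) -> bt_perm_inv b c = c.
Proof.
  intro Hb. unfold bt_perm_inv. rewrite iter_twist. unfold slice_rot.
  destruct excluded_middle_informative as [E|E]; [exfalso | apply sperm_cell_id].
  apply Hb. destruct b as [j v k]. simpl in *. subst v.
  destruct j, k; simpl; tauto.
Qed.

(** * Rigid labellings *)

Definition edge_point {L} (q : point L) : Prop :=
  exists j1 j2, j1 <> j2 /\ is_inf (get q j1) = true /\ is_inf (get q j2) = true.

Definition rigid {L X} (f : labelling L X) : Prop :=
  forall s, In s rotations -> forall q : point L, edge_point q ->
  (forall c, pt c = q -> f (sperm_cell s c) = f c /\ f c <> None) -> sperm_pt s q = q.

Lemma rigid_identity {L} : rigid (@f_identity L).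
Proof.
  intros s Hs q [j1 [_ [_ [H1 _]]]] H.
  destruct (H (exist _ (q, j1) H1) eq_refl) as [E _]. injection E as E.
  apply (f_equal (@proj1_sig _ _)) in E. rewrite sperm_cell_val in E by exact Hs.
  now injection E.
Qed.

Definition solved_color {L} (v : coord L) (i : axis) : option color :=
  match v, i with
  | pinf, AX => Some red | pinf, AY => Some blue | pinf, AZ => Some white
  | ninf, AX => Some orange | ninf, AY => Some green | ninf, AZ => Some yellow
  | _, _ => Some red
  end.

Lemma f_solved_eq {L} (c : cell L) : f_solved c = solved_color (get (pt c) (ax c)) (ax c).
Proof. destruct c as [[p i] H]; reflexivity. Qed.

Lemma solved_color_inj {L} (v v' : coord L) j j' : is_inf v = true -> is_inf v' = true ->
  solved_color v j = solved_color v' j' -> v = v' /\ j = j'.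
Proof. destruct v, v', j, j'; simpl; intros; try discriminate; auto. Qed.

Lemma solved_preserving_rotation_fixes_axis {L} s (c : cell L) : In s rotations ->
  f_solved (sperm_cell s c) = f_solved c ->
  sperm_axis s (ax c) = ax c /\ sperm_flip s (ax c) = false.
Proof.
  intros Hs E.
  rewrite !f_solved_eq, pt_sperm_cell, ax_sperm_cell, get_sperm_pt_axis in E by exact Hs.
  assert (Hc : is_inf (get (pt c) (ax c)) = true) by exact (proj2_sig c).
  apply solved_color_inj in E as [Ev Ej]; [| now rewrite is_inf_sgn | exact Hc].
  split; [exact Ej|]. rewrite Ej in Ev.
  destruct (sperm_flip s (ax c)); [|reflexivity].
  destruct (get (pt c) (ax c)); simpl in *; congruence.
Qed.

Lemma rigid_solved {L} : rigid (@f_solved L).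
Proof.
  intros s Hs q [j1 [j2 [Hj [H1 H2]]]] H.
  destruct (solved_preserving_rotation_fixes_axis (exist _ (q, j1) H1) Hs
              (proj1 (H (exist _ (q, j1) H1) eq_refl))) as [A1 F1].
  destruct (solved_preserving_rotation_fixes_axis (exist _ (q, j2) H2) Hs
              (proj1 (H (exist _ (q, j2) H2) eq_refl))) as [A2 F2].
  rewrite (rotation_fixing_two_axes Hs Hj A1 F1 A2 F2). apply sperm_pt_id.
Qed.

Lemma rigid_act {L X} (b : basic_twist L) (f : labelling L X) : rigid f -> rigid (act b f).
Proof.
  intros Hf s Hs q Hq H. unfold act in H.
  set (rho := slice_rot (bt_axis b) (bt_val b) (4 - pow_nat (bt_pow b))).
  assert (Hinv : forall c, bt_perm_inv b c = sperm_cell (rho (pt c)) c)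
    by (intro; apply iter_twist).
  set (A := rho q). set (B := rho (sperm_pt s q)).
  assert (HA : In A rotations) by apply slice_rot_rotation.
  assert (HB : In B rotations) by apply slice_rot_rotation.
  destruct (rotations_inv HA) as [A' [HA' [E1 E2]]].
  set (s' := sperm_comp B (sperm_comp s A')).
  assert (Hs' : In s' rotations) by (apply rotations_comp; [|apply rotations_comp]; assumption).
  (* the twist conjugates [s] at [q] into [s'] at [A q] *)
  assert (K : sperm_pt s' (sperm_pt A q) = sperm_pt A q).
  { apply (Hf s' Hs').
    - destruct Hq as [j1 [j2 [Hj [H1 H2]]]]. exists (sperm_axis A j1), (sperm_axis A j2).
      split; [intro E; exact (Hj (sperm_axis_inj _ _ HA E))|].
      split; apply is_inf_sperm_axis; auto.
    - intros c0 Hc0. set (c := sperm_cell A' c0).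
      assert (Hc : pt c = q).
      { unfold c. now rewrite pt_sperm_cell, Hc0, <- sperm_pt_comp, E2, sperm_pt_id. }
      assert (Ec : bt_perm_inv b c = c0).
      { rewrite Hinv, Hc. fold A. unfold c.
        rewrite <- sperm_cell_comp, E1 by auto. apply sperm_cell_id. }
      assert (Ec' : bt_perm_inv b (sperm_cell s c) = sperm_cell s' c0).
      { rewrite Hinv, pt_sperm_cell, Hc by exact Hs. fold B. unfold c, s'.
        now rewrite !sperm_cell_comp by auto using rotations_comp. }
      rewrite <- Ec', <- Ec. apply H, Hc. }
  unfold s' in K. rewrite !sperm_pt_comp, <- (sperm_pt_comp A' A), E2, sperm_pt_id in K.
  exact (slice_rot_pt_inj _ _ _ K).
Qed.

Definition slice_edge {L} (i : axis) (a : coord L) : point L :=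
  match i with AX => (a, pinf, pinf) | AY => (pinf, a, pinf) | AZ => (pinf, pinf, a) end.

Lemma get_slice_edge {L} i (a : coord L) : get (slice_edge i a) i = a.
Proof. destruct i; reflexivity. Qed.

Lemma slice_edge_edge_point {L} i (a : coord L) : edge_point (slice_edge i a).
Proof.
  destruct i; [exists AY, AZ | exists AX, AZ | exists AX, AY]; repeat split; discriminate.
Qed.

Lemma quarter_pow_moves_slice_edge {L} i (a : coord L) k :
  sperm_pt (quarter_pow i (pow_nat k)) (slice_edge i a) <> slice_edge i a.
Proof. destruct i, k; cbv; intro H; inversion H. Qed.

Lemma rigid_legal_not_twist_invariant {L X} (f : labelling L X) (b : basic_twist L) :
  rigid f -> legal f -> (forall c, f (bt_perm_inv b c) = f c) -> False.
Proof.
  intros Hf Hl Hb. destruct b as [i a k].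
  set (M := quarter_pow i (pow_nat k)).
  apply (quarter_pow_moves_slice_edge i a k), (Hf M (quarter_pow_rotation _ _)).
  - apply slice_edge_edge_point.
  - intros c Hc. split; [|apply Hl].
    assert (E : bt_perm (BT i a k) c = sperm_cell M c).
    { unfold bt_perm. rewrite iter_twist. unfold slice_rot. simpl.
      destruct excluded_middle_informative as [_|n]; [reflexivity|].
      exfalso. apply n. rewrite Hc. apply get_slice_edge. }
    rewrite <- E, <- (Hb (bt_perm _ c)). f_equal. apply bt_perm_invK.
Qed.

(** * Stages *)

Section Stages.
Variables (I : Type) (lt : I -> I -> Prop).
Hypothesis Hwo : well_order lt.

Lemma wf_slt : well_founded (slt lt).
Proof.
  destruct Hwo as [Hwf _].
  assert (HS : forall a, Acc (slt lt) (Some a)).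
  { intro a. induction (Hwf a) as [a _ IH]. constructor.
    intros [b|] Hb; simpl in Hb; [now apply IH | contradiction]. }
  intros [a|]; [apply HS|]. constructor. intros [b|] Hb; simpl in Hb; [apply HS | contradiction].
Qed.

Lemma slt_irrefl s : ~ slt lt s s.
Proof.
  induction s as [s IH] using (well_founded_ind wf_slt). intro H. exact (IH s H H).
Qed.

Lemma slt_trans a b c : slt lt a b -> slt lt b c -> slt lt a c.
Proof. destruct Hwo as [_ [Ht _]]. destruct a, b, c; simpl; eauto; tauto. Qed.

Lemma slt_total a b : slt lt a b \/ a = b \/ slt lt b a.
Proof.
  destruct Hwo as [_ [_ Htot]]. destruct a as [a|], b as [b|]; simpl; auto.
  destruct (Htot a b) as [H|[H|H]]; subst; auto.
Qed.

Lemma sle_refl a : sle lt a a.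
Proof. now right. Qed.

Lemma sle_trans a b c : sle lt a b -> sle lt b c -> sle lt a c.
Proof. intros [H|H] [K|K]; subst; unfold sle; eauto using slt_trans. Qed.

Lemma slt_sle_trans a b c : slt lt a b -> sle lt b c -> slt lt a c.
Proof. intros H [K|K]; subst; eauto using slt_trans. Qed.

Lemma sle_slt_trans a b c : sle lt a b -> slt lt b c -> slt lt a c.
Proof. intros [H|H] K; subst; eauto using slt_trans. Qed.

Lemma slt_sle_false a b : slt lt a b -> sle lt b a -> False.
Proof. intros H K. apply (slt_irrefl a). eapply slt_sle_trans; eauto. Qed.

Lemma not_slt_sle a b : ~ slt lt a b -> sle lt b a.
Proof.
  intro H. destruct (slt_total a b) as [K|[K|K]]; [tauto | subst; apply sle_refl | now left].
Qed.

Lemma sle_final a : sle lt a None.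
Proof. destruct a; [now left | now right]. Qed.

Lemma stage_max a b : exists m, sle lt a m /\ sle lt b m /\ (m = a \/ m = b).
Proof.
  destruct (slt_total a b) as [H|[H|H]]; [exists b | subst; exists b | exists a];
    unfold sle; auto.
Qed.

Lemma stage_min (P : stage I -> Prop) x : P x -> exists y, P y /\ forall z, slt lt z y -> ~ P z.
Proof.
  induction x as [x IH] using (well_founded_ind wf_slt). intro Px.
  destruct (classic (exists z, slt lt z x /\ P z)) as [[z [Hz Pz]]|Hn].
  - exact (IH z Hz Pz).
  - exists x. split; [exact Px|]. intros z Hz Pz. apply Hn. eauto.
Qed.

Definition is_succ (e : I) (s : stage I) : Prop :=
  slt lt (Some e) s /\ forall t, slt lt (Some e) t -> sle lt s t.

Lemma stage_cases s : (forall t, ~ slt lt t s) \/ (exists e, is_succ e s) \/ is_limit lt s.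
Proof.
  destruct (classic (exists t, slt lt t s)) as [[t Ht]|Hn]; [right | left; eauto].
  destruct (classic (exists e, is_succ e s)) as [He|He]; [now left | right].
  split; [eauto|]. intros u Hu. apply NNPP. intro Hne.
  apply He. destruct u as [e|]; [|contradiction].
  exists e. split; [exact Hu|]. intros v Hv. apply not_slt_sle. intro Hvs. apply Hne. eauto.
Qed.

Lemma succ_exists e s : slt lt (Some e) s -> exists s', is_succ e s' /\ sle lt s' s.
Proof.
  induction s as [s IH] using (well_founded_ind wf_slt). intro Hs.
  destruct (classic (exists y, slt lt y s /\ slt lt (Some e) y)) as [[y [Hy1 Hy2]]|Hn].
  - destruct (IH y Hy1 Hy2) as [s' [K1 K2]]. exists s'. split; [exact K1|].
    eapply sle_trans; [exact K2 | now left].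
  - exists s. split; [split; [exact Hs|] | apply sle_refl].
    intros t Ht. apply not_slt_sle. intro Hts. apply Hn. eauto.
Qed.

Lemma is_succ_sle e s : is_succ e s -> forall t, slt lt t s -> sle lt t (Some e).
Proof. intros [H1 H2] t Ht. apply not_slt_sle. intro K. exact (slt_sle_false Ht (H2 t K)). Qed.

Lemma succ_unique e e' s : is_succ e s -> is_succ e' s -> e = e'.
Proof.
  intros [H1 H2] [K1 K2]. destruct Hwo as [_ [_ Htot]].
  destruct (Htot e e') as [E|[E|E]]; [exfalso | exact E | exfalso].
  - exact (slt_sle_false K1 (H2 (Some e') E)).
  - exact (slt_sle_false H1 (K2 (Some e) E)).
Qed.

Lemma limit_not_succ s e : is_limit lt s -> ~ is_succ e s.
Proof.
  intros Hl He. destruct (proj2 Hl (Some e) (proj1 He)) as [u [U1 U2]].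
  exact (slt_sle_false U2 (proj2 He u U1)).
Qed.

Lemma limit_bound_below (l : list I) s : is_limit lt s ->
  exists t, slt lt t s /\ forall e, In e l -> slt lt (Some e) s -> sle lt (Some e) t.
Proof.
  intro Hl. induction l as [|e l [t [Ht K]]].
  - destruct (proj1 Hl) as [t Ht]. exists t. split; [exact Ht | intros e []].
  - destruct (classic (slt lt (Some e) s)) as [Hes|Hes].
    + destruct (stage_max (Some e) t) as [m [Hm1 [Hm2 Hm]]]. exists m.
      split; [destruct Hm; subst; assumption|].
      intros e' [E|E] He'; [now subst | eapply sle_trans; eauto].
    + exists t. split; [exact Ht|]. intros e' [E|E] He'; [now subst | auto].
Qed.

Lemma cofinal_limit (P : I -> Prop) : (forall l : list I, exists e, P e /\ ~ In e l) ->
  exists s, is_limit lt s /\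
    forall t, slt lt t s -> exists e, P e /\ slt lt t (Some e) /\ slt lt (Some e) s.
Proof.
  intro HP.
  set (unbounded := fun s => forall l : list I, exists e, P e /\ slt lt (Some e) s /\ ~ In e l).
  assert (Hfinal : unbounded None) by (intro l; destruct (HP l) as [e [He Hl]]; now exists e).
  destruct (@stage_min unbounded None Hfinal) as [s [Hs Hmin]].
  assert (cof : forall t, slt lt t s -> exists e, P e /\ slt lt t (Some e) /\ slt lt (Some e) s).
  { intros t Ht. destruct (not_all_ex_not _ _ (Hmin t Ht)) as [l Hl].
    destruct (Hs (l ++ match t with Some x => [x] | None => [] end)) as [e [E1 [E2 E3]]].
    exists e. split; [exact E1|]. split; [|exact E2].
    destruct (slt_total t (Some e)) as [K|[K|K]]; [exact K | exfalso ..].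
    - subst. apply E3, in_or_app. right. now left.
    - apply Hl. exists e. split; [exact E1|]. split; [exact K|].
      intro Hi. apply E3, in_or_app. now left. }
  exists s. split; [|exact cof]. split.
  - destruct (Hs []) as [e [_ [E _]]]. eauto.
  - intros t Ht. destruct (cof t Ht) as [e [_ [E1 E2]]]. eauto.
Qed.

Lemma eventually_const_unique {L X} (F : stage I -> labelling L X) s c v w :
  eventually_const lt F s c v -> eventually_const lt F s c w -> v = w.
Proof.
  intros [t1 [H1 K1]] [t2 [H2 K2]]. destruct (stage_max t1 t2) as [m [Hm1 [Hm2 Hm]]].
  assert (Hms : slt lt m s) by (destruct Hm; subst; assumption).
  rewrite <- (K1 m Hm1 Hms). now apply K2.
Qed.

(** * Runs *)

Section Runs.
Variables (L X : Type) (sigma : I -> basic_twist L) (f0 : labelling L X).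
Variable F : stage I -> labelling L X.
Hypothesis Hrun : is_run lt sigma f0 F.

Lemma run_init s : (forall t, ~ slt lt t s) -> F s = f0.
Proof. apply (proj1 Hrun). Qed.

Lemma run_succ e s : is_succ e s -> F s = act (sigma e) (F (Some e)).
Proof. intros [H1 H2]. now apply (proj1 (proj2 Hrun)). Qed.

Lemma run_limit s c v : is_limit lt s -> eventually_const lt F s c v -> F s c = v.
Proof. intro Hl. apply (proj1 (proj2 (proj2 Hrun) s Hl c)). Qed.

Lemma run_limit_eventually_const s c : is_limit lt s -> F s c <> None ->
  eventually_const lt F s c (F s c).
Proof.
  intros Hl Hn. destruct (classic (exists v, eventually_const lt F s c v)) as [[v Hv]|Hv].
  - now rewrite (run_limit Hl Hv).
  - exfalso. exact (Hn (proj2 (proj2 (proj2 Hrun) s Hl c) Hv)).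
Qed.

Lemma run_limit_tail s (l : list (cell L)) : is_limit lt s -> (forall c, In c l -> F s c <> None) ->
  exists t, slt lt t s /\ forall u, sle lt t u -> slt lt u s -> forall c, In c l -> F u c = F s c.
Proof.
  intro Hl. induction l as [|c l IH]; intro Hn.
  - destruct (proj1 Hl) as [t Ht]. exists t. split; [exact Ht | intros u _ _ c []].
  - destruct IH as [t2 [Ht2 K2]]; [intros d Hd; apply Hn; now right|].
    destruct (run_limit_eventually_const Hl (Hn c (or_introl eq_refl))) as [t1 [Ht1 K1]].
    destruct (stage_max t1 t2) as [m [Hm1 [Hm2 Hm]]].
    exists m. split; [destruct Hm; subst; assumption|].
    intros u Hu Hus d [Hd|Hd]; [subst; apply K1 | apply K2]; eauto using sle_trans.
Qed.

Definition cells_at_axis (q : point L) (j : axis) : list (cell L) :=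
  match bool_dec (is_inf (get q j)) true with
  | left H => [exist (fun r : point L * axis => is_inf (get (fst r) (snd r)) = true) (q, j) H]
  | right _ => []
  end.

Definition cells_at (q : point L) : list (cell L) :=
  cells_at_axis q AX ++ cells_at_axis q AY ++ cells_at_axis q AZ.

Lemma in_cells_at (c : cell L) q : In c (cells_at q) <-> pt c = q.
Proof.
  unfold cells_at, cells_at_axis. split.
  - intro H. repeat destruct bool_dec; simpl in H; intuition subst; reflexivity.
  - destruct c as [[p j] H]. unfold pt; simpl. intros <-. rewrite !in_app_iff.
    destruct j; [left | right; left | right; right];
      (destruct bool_dec as [H'|H']; [left; now apply cell_eq | contradiction]).
Qed.

Lemma rigid_run : rigid f0 -> forall u, rigid (F u).
Proof.
  intros H0 u. induction u as [u IH] using (well_founded_ind wf_slt).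
  destruct (stage_cases u) as [Hm|[[e He]|Hl]].
  - now rewrite run_init.
  - rewrite (run_succ He). apply rigid_act, IH, He.
  - intros s Hs q Hq H.
    set (l := cells_at q ++ map (sperm_cell s) (cells_at q)).
    destruct (@run_limit_tail u l Hl) as [t [Ht K]].
    { intros c Hc. apply in_app_or in Hc as [Hc|Hc].
      - apply (H c), in_cells_at, Hc.
      - apply in_map_iff in Hc as [d [<- Hd]].
        destruct (H d (proj1 (in_cells_at d q) Hd)) as [E1 E2]. now rewrite E1. }
    apply (IH t Ht s Hs q Hq). intros c Hc.
    assert (Hc1 : In c l) by (apply in_or_app; left; now apply in_cells_at).
    assert (Hc2 : In (sperm_cell s c) l)
      by (apply in_or_app; right; apply in_map; now apply in_cells_at).
    rewrite (K t (sle_refl t) Ht c Hc1), (K t (sle_refl t) Ht _ Hc2). now apply H.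
Qed.

Lemma nac_persists s c : F s c = None ->
  forall u, sle lt s u -> exists g, In g rotations /\ F u (sperm_cell g c) = None.
Proof.
  intros H0 u. induction u as [u IH] using (well_founded_ind wf_slt). intro Hsu.
  destruct Hsu as [Hsu|<-].
  2: { exists sperm_id. split; [exact sperm_id_rotation | now rewrite sperm_cell_id]. }
  destruct (stage_cases u) as [Hm|[[e He]|Hl]].
  - exfalso. exact (Hm s Hsu).
  - destruct (IH (Some e) (proj1 He) (is_succ_sle He _ Hsu)) as [g [Hg Eg]].
    set (b := sigma e). set (d := sperm_cell g c).
    set (r := slice_rot (bt_axis b) (bt_val b) (pow_nat (bt_pow b)) (pt d)).
    exists (sperm_comp r g). split; [apply rotations_comp; [apply slice_rot_rotation | exact Hg]|].
    rewrite (run_succ He). unfold act.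
    rewrite sperm_cell_comp by (apply slice_rot_rotation || exact Hg). fold d.
    unfold r. rewrite <- iter_twist. fold (bt_perm b d). now rewrite bt_perm_invK.
  - apply NNPP. intro Hn.
    destruct (@run_limit_tail u (map (fun g => sperm_cell g c) rotations) Hl) as [t [Ht K]].
    { intros d Hd. apply in_map_iff in Hd as [g [<- Hg]]. intro E. apply Hn. eauto. }
    destruct (stage_max t s) as [w [Hw1 [Hw2 Hw]]].
    assert (Hwu : slt lt w u) by (destruct Hw; subst; assumption).
    destruct (IH w Hwu Hw2) as [g [Hg Eg]].
    apply Hn. exists g. split; [exact Hg|]. rewrite <- (K w Hw1 Hwu); [exact Eg|].
    now apply (in_map (fun g => sperm_cell g c)).
Qed.

Lemma nac_final s c : F s c = None -> ~ legal (F None).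
Proof. intros H Hl. destruct (nac_persists H (sle_final s)) as [g [_ E]]. exact (Hl _ E). Qed.

Lemma run_const_while_fixed t s c :
  (forall e, sle lt t (Some e) -> slt lt (Some e) s -> bt_perm_inv (sigma e) c = c) ->
  forall u, sle lt t u -> slt lt u s -> F u c = F t c.
Proof.
  intros Hfix u. induction u as [u IH] using (well_founded_ind wf_slt). intros Htu Hus.
  destruct Htu as [Htu|<-]; [|reflexivity].
  destruct (stage_cases u) as [Hm|[[e He]|Hl]].
  - exfalso. exact (Hm t Htu).
  - assert (Hte : sle lt t (Some e)) by exact (is_succ_sle He _ Htu).
    assert (Hes : slt lt (Some e) s) by (eapply slt_trans; [apply He | exact Hus]).
    rewrite (run_succ He). unfold act. rewrite Hfix by assumption.
    apply IH; [apply He | exact Hte | exact Hes].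
  - apply (run_limit Hl). exists t. split; [exact Htu|].
    intros w Hw Hwu. apply IH; [exact Hwu | exact Hw | eapply slt_trans; eauto].
Qed.

Lemma twist_finite_occurrences : twist_finite sigma ->
  forall bs, exists l, forall e, In (sigma e) bs -> In e l.
Proof.
  intros HT bs. induction bs as [|b bs [l2 IH]]; [exists []; intros e []|].
  destruct (HT b) as [l1 H1]. exists (l1 ++ l2). intros e [E|E]; apply in_or_app; auto.
Qed.

Lemma twist_finite_run_legal : twist_finite sigma -> legal f0 -> forall u, legal (F u).
Proof.
  intros HT H0 u. induction u as [u IH] using (well_founded_ind wf_slt). intro c.
  destruct (stage_cases u) as [Hm|[[e He]|Hl]].
  - rewrite (run_init _ Hm). apply H0.
  - rewrite (run_succ He). apply IH, He.
  - destruct (twist_finite_occurrences HT (slice_twists c)) as [l Hlist].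
    destruct (limit_bound_below l Hl) as [t [Ht K]].
    destruct (proj2 Hl t Ht) as [t' [Ht1 Ht2]].
    assert (Hc : forall w, sle lt t' w -> slt lt w u -> F w c = F t' c).
    { apply run_const_while_fixed. intros e He1 He2.
      apply bt_perm_inv_outside_slice. intro Hin.
      apply (slt_irrefl (Some e)). eapply sle_slt_trans; [exact (K e (Hlist e Hin) He2)|].
      eapply slt_sle_trans; eauto. }
    rewrite (run_limit (v := F t' c) Hl); [apply IH, Ht2|].
    exists t'. split; [exact Ht2 | exact Hc].
Qed.

Lemma limit_cofinal_twist_invariant b s : is_limit lt s -> legal (F s) ->
  (forall t, slt lt t s -> exists e, sigma e = b /\ slt lt t (Some e) /\ slt lt (Some e) s) ->
  forall c, F s (bt_perm_inv b c) = F s c.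
Proof.
  intros Hl Hleg Hcof c.
  destruct (@run_limit_tail s [c; bt_perm_inv b c] Hl) as [t [Ht K]]; [intros d _; apply Hleg|].
  destruct (Hcof t Ht) as [e [Eb [E1 E2]]].
  destruct (succ_exists _ _ E2) as [s' [Hs' _]].
  destruct (Hcof (Some e) E2) as [e2 [_ [F1 F2]]].
  assert (Hs's : slt lt s' s) by (eapply sle_slt_trans; [apply (proj2 Hs'), F1 | exact F2]).
  assert (Hts' : sle lt t s') by (left; eapply slt_trans; [exact E1 | apply Hs']).
  rewrite <- (K s' Hts' Hs's c (or_introl eq_refl)).
  rewrite <- (K (Some e) (or_introl E1) E2 (bt_perm_inv b c) (or_intror (or_introl eq_refl))).
  rewrite (run_succ Hs'), Eb. reflexivity.
Qed.

Lemma not_twist_finite_final_illegal : rigid f0 -> ~ twist_finite sigma -> ~ legal (F None).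
Proof.
  intros H0 Hntf Hleg.
  destruct (not_all_ex_not _ _ Hntf) as [b Hb].
  assert (Hinf : forall l, exists e, sigma e = b /\ ~ In e l).
  { intro l. apply NNPP. intro Hn. apply Hb. exists l. intros e He.
    apply NNPP. intro Hi. apply Hn. eauto. }
  destruct (cofinal_limit _ Hinf) as [s [Hl Hcof]].
  destruct (classic (legal (F s))) as [Hs|Hs].
  - exact (rigid_legal_not_twist_invariant b (rigid_run H0 (u := s)) Hs
             (limit_cofinal_twist_invariant Hl Hs Hcof)).
  - apply Hs. intros c Hc. exact (nac_final Hc Hleg).
Qed.

End Runs.

(** * Existence of runs *)

Section CanonicalRun.
Variables (L X : Type) (sigma : I -> basic_twist L) (f0 : labelling L X).

(* [None] below is a junk value: [restrict_below] is only used at stages [t < s]. *)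
Definition restrict_below s (rec : forall t, slt lt t s -> labelling L X) :
  stage I -> labelling L X :=
  fun t => match excluded_middle_informative (slt lt t s) with
           | left p => rec t p
           | right _ => fun _ => None
           end.

Definition run_step s (rec : forall t, slt lt t s -> labelling L X) : labelling L X :=
  let R := restrict_below s rec in
  match excluded_middle_informative (exists t, slt lt t s) with
  | right _ => f0
  | left _ =>
    match excluded_middle_informative (exists e, is_succ e s) with
    | left H => let e := proj1_sig (constructive_indefinite_description _ H) in
                act (sigma e) (R (Some e))
    | right _ => fun c =>
        match excluded_middle_informative (exists v, eventually_const lt R s c v) with
        | left H => proj1_sig (constructive_indefinite_description _ H)
        | right _ => None
        end
    end
  end.

Definition canonical_run : stage I -> labelling L X :=
  Fix wf_slt (fun _ => labelling L X) run_step.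

Lemma canonical_run_eq s : canonical_run s = run_step s (fun t _ => canonical_run t).
Proof.
  apply (Fix_eq wf_slt (fun _ => labelling L X) run_step).
  intros x f g Hfg. replace f with g; [reflexivity|].
  apply functional_extensionality_dep. intro y.
  apply functional_extensionality_dep. intro p. symmetry. apply Hfg.
Qed.

Lemma restrict_below_eq s t :
  slt lt t s -> restrict_below s (fun t _ => canonical_run t) t = canonical_run t.
Proof. intro H. unfold restrict_below. now destruct excluded_middle_informative. Qed.

Lemma eventually_const_restrict_below s c v :
  eventually_const lt (restrict_below s (fun t _ => canonical_run t)) s c v <->
  eventually_const lt canonical_run s c v.
Proof.
  split; intros [t [Ht K]]; exists t; split; [exact Ht | | exact Ht |];
    intros u Hu Hus; rewrite <- (K u Hu Hus), restrict_below_eq; auto.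
Qed.

Lemma canonical_run_is_run : is_run lt sigma f0 canonical_run.
Proof.
  split; [|split].
  - intros s Hs. rewrite canonical_run_eq. unfold run_step.
    destruct excluded_middle_informative as [[t Ht]|_]; [exfalso; exact (Hs t Ht) | reflexivity].
  - intros e s H1 H2. assert (Hsucc : is_succ e s) by (split; assumption).
    rewrite canonical_run_eq. unfold run_step.
    destruct excluded_middle_informative as [_|Hn]; [|exfalso; apply Hn; eauto].
    destruct excluded_middle_informative as [H|Hn]; [|exfalso; apply Hn; eauto].
    destruct (constructive_indefinite_description _ H) as [e' He']. simpl.
    rewrite (succ_unique He' Hsucc). now rewrite restrict_below_eq.
  - intros s Hl c. rewrite canonical_run_eq. unfold run_step.
    destruct excluded_middle_informative as [_|Hn]; [|exfalso; apply Hn, Hl].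
    destruct excluded_middle_informative as [[e He]|_]; [exfalso; exact (limit_not_succ Hl He)|].
    split.
    + intros v Hv. destruct excluded_middle_informative as [H|Hn].
      * destruct (constructive_indefinite_description _ H) as [v' Hv']. simpl.
        apply eventually_const_restrict_below in Hv'. exact (eventually_const_unique Hv' Hv).
      * exfalso. apply Hn. exists v. now apply eventually_const_restrict_below.
    + intro Hn. destruct excluded_middle_informative as [[v Hv]|_]; [|reflexivity].
      exfalso. apply Hn. exists v. now apply eventually_const_restrict_below.
Qed.

End CanonicalRun.

Lemma twist_finite_convergent L X (sigma : I -> basic_twist L) (f0 : labelling L X) :
  legal f0 -> twist_finite sigma -> convergent lt sigma f0.
Proof.
  intros H0 HT. exists (canonical_run sigma f0). split; [apply canonical_run_is_run|].
  exact (twist_finite_run_legal (canonical_run_is_run sigma f0) HT H0 None).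
Qed.

Lemma convergent_twist_finite L X (sigma : I -> basic_twist L) (f0 : labelling L X) :
  rigid f0 -> convergent lt sigma f0 -> twist_finite sigma.
Proof.
  intros H0 [F [HF Hl]]. apply NNPP. intro Hn. exact (not_twist_finite_final_illegal HF H0 Hn Hl).
Qed.

End Stages.

Theorem lemma4p2 (L : Type) (HL : infinite L)
  (I : Type) (lt : I -> I -> Prop) (Hwo : well_order lt)
  (sigma : I -> basic_twist L) :
  (convergent lt sigma (@f_solved L) <-> universally_convergent lt sigma) /\
  (universally_convergent lt sigma <-> twist_finite sigma).
Proof.
  assert (Hsolved : legal (@f_solved L)).
  { intro c. rewrite f_solved_eq. now destruct (get (pt c) (ax c)), (ax c). }
  assert (Hidentity : legal (@f_identity L)) by (intros c; discriminate).
  pose proof (convergent_twist_finite Hwo (sigma := sigma) rigid_solved).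
  pose proof (convergent_twist_finite Hwo (sigma := sigma) rigid_identity).
  pose proof (twist_finite_convergent Hwo (sigma := sigma) Hsolved).
  pose proof (twist_finite_convergent Hwo (sigma := sigma) Hidentity).
  unfold universally_convergent. tauto.
Qed.
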